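(* Let $M$ be a matroid such that the 1-skeleton of $P(M)$ (equivalently, the base graph $G(M)$) is isomorphic to the graph of a $d$-dimensional hypercube. Then $P(M)$ is indecomposable.
   Context: For a matroid $N$ on $E=\{1,\dots,n\}$, $P(N)=\mathrm{conv}\{\sum_{i\in B}e_i : B \text{ a base of } N\}\subset\mathbb{R}^n$. The base graph $G(M)$ has the bases of $M$ as vertices, two bases adjacent iff their symmetric difference has exactly two elements. A matroid base polytope decomposition of $P(M)$ is an expression $P(M)=\bigcup_{i=1}^t P(M_i)$ with each $M_i$ a matroid on $E$ and $P(M_i)\cap P(M_j)$ a face of both $P(M_i)$ and $P(M_j)$ for all $i\neq j$. $P(M)$ is decomposable if it has such a decomposition with $t\ge 2$ and every $P(M_i)\neq P(M)$, and indecomposable otherwise. *)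

From HB Require Import structures.
From mathcomp Require Import all_boot all_order all_algebra.
Set Implicit Arguments. Unset Strict Implicit. Unset Printing Implicit Defensive.
Import Order.TTheory GRing.Theory Num.Theory.
Local Open Scope ring_scope.

Record matroid (n : nat) := Matroid {
  bases : {set {set 'I_n}};
  bases_nonempty : bases != set0;
  bases_exchange : forall B1 B2, B1 \in bases -> B2 \in bases ->
    forall x, x \in B1 :\: B2 ->
      exists2 y, y \in B2 :\: B1 & (y |: (B1 :\ x)) \in bases
}.

Definition indic (R : realFieldType) (n : nat) (B : {set 'I_n}) : 'rV[R]_n :=
  \row_i (i \in B)%:R.

Definition base_polytope (R : realFieldType) (n : nat) (N : matroid n)
    (x : 'rV[R]_n) : Prop :=
  exists lam : {set 'I_n} -> R,
    [/\ forall B, 0 <= lam B,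
        forall B, B \notin bases N -> lam B = 0,
        \sum_B lam B = 1
      & x = \sum_B lam B *: indic R B].

Arguments base_polytope R {n} N x.
Arguments indic R {n} B.

Definition dotv (R : realFieldType) (n : nat) (c x : 'rV[R]_n) : R :=
  \sum_i c ord0 i * x ord0 i.

(* F is a face of the polytope P: the intersection of P with a supporting
   hyperplane {c.x = d} where c.x <= d on P (allows the empty face and P). *)
Definition is_face (R : realFieldType) (n : nat) (P F : 'rV[R]_n -> Prop) : Prop :=
  exists (c : 'rV[R]_n) (d : R),
    (forall x, P x -> dotv c x <= d) /\
    (forall x, F x <-> (P x /\ dotv c x = d)).

Definition mbp_decomposition (R : realFieldType) (n : nat) (M : matroid n)
    (t : nat) (Ms : 'I_t -> matroid n) : Prop :=
  (forall x, base_polytope R M x <-> exists i, base_polytope R (Ms i) x) /\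
  (forall i j, i != j ->
     is_face (base_polytope R (Ms i))
             (fun x => base_polytope R (Ms i) x /\ base_polytope R (Ms j) x) /\
     is_face (base_polytope R (Ms j))
             (fun x => base_polytope R (Ms i) x /\ base_polytope R (Ms j) x)).

Definition decomposable (R : realFieldType) (n : nat) (M : matroid n) : Prop :=
  exists (t : nat) (Ms : 'I_t -> matroid n),
    [/\ (2 <= t)%N, @mbp_decomposition R n M t Ms
      & forall i, ~ (forall x, base_polytope R (Ms i) x <-> base_polytope R M x)].

Arguments decomposable R {n} M.

Definition indecomposable (R : realFieldType) (n : nat) (M : matroid n) : Prop :=
  ~ decomposable R M.

Definition base_adj (n : nat) (B1 B2 : {set 'I_n}) : bool :=
  #|(B1 :\: B2) :|: (B2 :\: B1)| == 2%N.

Definition cube_adj (d : nat) (u v : {ffun 'I_d -> bool}) : bool :=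
  #|[set i | u i != v i]| == 1%N.

Definition base_graph_is_cube (n : nat) (M : matroid n) (d : nat) : Prop :=
  exists phi : {ffun 'I_d -> bool} -> {set 'I_n},
    [/\ injective phi,
        forall B, B \in bases M <-> exists v, phi v = B
      & forall u v, base_adj (phi u) (phi v) = cube_adj u v].

From HB Require Import structures.
From mathcomp Require Import all_boot all_order all_algebra.
Set Implicit Arguments. Unset Strict Implicit. Unset Printing Implicit Defensive.
Import GRing.Theory Num.Theory.

(* Let phi : {0,1}^d -> bases(M) be the graph isomorphism.  First, by induction
   along exchange steps, |phi u \ phi v| equals the Hamming distance of u and v.
   Consequently, if N is a matroid whose bases are bases of M and which
   contains two bases phi s, phi t differing in coordinate k, then phi(flip s k)
   is a base of N: the exchanges from phi s towards phi t reach as many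
   neighbours of phi s as there are coordinates where s and t differ.  Hence if
   every coordinate varies among the bases of N, N has all bases of M.
   Second, the barycenter x of P(M) lies in some piece P(M_i) of a
   decomposition, and every base of M_i is a base of M (vertices of P(M_i) lie
   in P(M)).  If all bases of M_i agreed in coordinate k, the linear functional
   e_{phi s} - e_{phi (flip s k)} would be 1 on P(M_i) but 0 at x, by the
   symmetry v |-> flip v k of the cube.  So every coordinate varies, M_i has
   all bases of M, and P(M_i) = P(M): no decomposition is proper. *)

Lemma exchange_sets n (B1 B2 : {set 'I_n}) x y :
  x \in B1 :\: B2 -> y \in B2 :\: B1 ->
  [/\ B1 :\: (y |: (B1 :\ x)) = [set x], (y |: (B1 :\ x)) :\: B1 = [set y],
      (y |: (B1 :\ x)) :\: B2 = (B1 :\: B2) :\ x & base_adj B1 (y |: (B1 :\ x))].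
Proof.
rewrite !inE => /andP[/negbTE xB2 xB1] /andP[/negbTE yB1 yB2].
have xy : x != y by apply: contraTneq xB1 => ->; rewrite yB1.
have e1 : B1 :\: (y |: (B1 :\ x)) = [set x].
  apply/setP=> z; rewrite !inE; case: (eqVneq z x) => [->|_]; first by rewrite (negbTE xy) xB1.
  by case: (eqVneq z y) => [->|_] /=; rewrite ?yB1 ?andNb.
have e2 : (y |: (B1 :\ x)) :\: B1 = [set y].
  apply/setP=> z; rewrite !inE; case: (eqVneq z y) => [->|_]; first by rewrite yB1.
  by case: (z \in B1); rewrite ?andbF.
split=> //; last by rewrite /base_adj e1 e2 cards2 xy.
apply/setP=> z; rewrite !inE; case: (eqVneq z y) => [->|_] /=; first by rewrite yB2 andbF.
by rewrite andbCA.
Qed.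

Lemma card_setD_triangle n (A B C : {set 'I_n}) :
  #|A :\: C| <= #|A :\: B| + #|B :\: C|.
Proof.
apply: leq_trans (leq_card_setU _ _); apply: subset_leq_card.
by apply/subsetP=> i; rewrite !inE; case: (i \in A); case: (i \in B); case: (i \in C).
Qed.

Section BaseExchange.
Variables (n : nat) (N : matroid n).

(* Two bases with B1 \ B2 empty coincide (exchange from B2 would be impossible). *)
Lemma base_eq_of_setD0 B1 B2 : B1 \in bases N -> B2 \in bases N ->
  B1 :\: B2 = set0 -> B1 = B2.
Proof.
move=> h1 h2 e.
have e' : B2 :\: B1 = set0.
  case: (set_0Vmem (B2 :\: B1)) => [//|[z hz]].
  have [y hy _] := bases_exchange h2 h1 hz.
  by rewrite e inE in hy.
by apply/eqP; rewrite eqEsubset -!setD_eq0 e e' !eqxx.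
Qed.

Lemma base_adj_card_setD B1 B2 : B1 \in bases N -> B2 \in bases N ->
  base_adj B1 B2 -> #|B1 :\: B2| = 1%N.
Proof.
move=> h1 h2; rewrite /base_adj cardsU.
have -> : (B1 :\: B2) :&: (B2 :\: B1) = set0.
  by apply/setP=> z; rewrite !inE; case: (z \in B1); rewrite ?andbF.
rewrite cards0 subn0 => /eqP hc.
case e12: #|B1 :\: B2| hc => [|[|m]] // hc.
  by rewrite (base_eq_of_setD0 h1 h2 (cards0_eq e12)) setDv cards0 in hc.
have e21 : #|B2 :\: B1| = 0%N.
  by move: hc; rewrite !addSn => -[] /eqP; rewrite addn_eq0 => /andP[_ /eqP].
by rewrite (base_eq_of_setD0 h2 h1 (cards0_eq e21)) setDv cards0 in e12.
Qed.

End BaseExchange.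

Definition hamming d (u v : {ffun 'I_d -> bool}) : nat := #|[set i | u i != v i]|.

Definition flip d (u : {ffun 'I_d -> bool}) k : {ffun 'I_d -> bool} :=
  [ffun i => if i == k then ~~ u k else u i].

Section Hypercube.
Variable d : nat.
Implicit Types u v w s : {ffun 'I_d -> bool}.

Lemma flipK (k : 'I_d) : involutive (fun u : {ffun 'I_d -> bool} => flip u k).
Proof. by move=> u; apply/ffunP=> i; rewrite !ffunE eqxx; case: eqP => [->|]; rewrite ?negbK. Qed.

Lemma flip_at u k : flip u k k = ~~ u k.
Proof. by rewrite ffunE eqxx. Qed.

Lemma hamming_sym u v : hamming u v = hamming v u.
Proof. by apply: eq_card => i; rewrite !inE eq_sym. Qed.

Lemma hamming_triangle u w v : hamming u v <= hamming u w + hamming w v.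
Proof.
apply: leq_trans (leq_card_setU _ _); apply: subset_leq_card.
by apply/subsetP=> i; rewrite !inE; case: (u i); case: (w i); case: (v i).
Qed.

Lemma hamming0 u v : hamming u v = 0%N -> u = v.
Proof.
move/cards0_eq/setP=> E; apply/ffunP=> i.
by apply/eqP; move: (E i); rewrite !inE => /negbFE.
Qed.

Lemma hamming_gt0 u v : (0 < hamming u v)%N -> exists k, u k != v k.
Proof. by rewrite card_gt0 => /set0Pn [k]; rewrite inE; exists k. Qed.

Lemma hamming_flip u v k : u k != v k -> hamming u v = (hamming (flip u k) v).+1.
Proof.
move=> h; rewrite /hamming.
have -> : [set i | u i != v i] = k |: [set i | flip u k i != v i].
  apply/setP=> i; rewrite !inE ffunE.
  by case: (eqVneq i k) => [->|]; rewrite ?h.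
by rewrite cardsU1 inE flip_at; move: h; case: (u k); case: (v k).
Qed.

Lemma hamming_flip_same u v k : u k = v k -> hamming (flip u k) v = (hamming u v).+1.
Proof. by move=> h; rewrite (@hamming_flip (flip u k) v k) ?flipK // flip_at h; case: (v k). Qed.

Lemma cube_adj_flip u k : cube_adj u (flip u k).
Proof.
rewrite /cube_adj (_ : [set i | _] = [set k]) ?cards1 //.
apply/setP=> i; rewrite !inE ffunE.
by case: (eqVneq i k) => [->|]; rewrite ?eqxx //; case: (u k).
Qed.

Lemma cube_adjP u v : cube_adj u v -> exists k, v = flip u k.
Proof.
move=> /cards1P [k /setP hk]; exists k; apply/ffunP=> i; rewrite ffunE.
move: (hk i); rewrite !inE; case: (eqVneq i k) => [->|_] /=.
  by case: (u k); case: (v k).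
by move/negbFE/eqP.
Qed.

Local Open Scope ring_scope.

Lemma hamming_flip_sign (R : pzRingType) s v k :
  (hamming v (flip s k))%:R - (hamming v s)%:R =
  (if v k == s k then 1 else -1 : R).
Proof.
rewrite ![hamming v _]hamming_sym; case: eqVneq => [/esym e|ne].
  by rewrite hamming_flip_same // -addn1 natrD addrAC subrr add0r.
have sv : s k != v k by rewrite eq_sym.
by rewrite (hamming_flip sv) -addn1 natrD opprD addrA subrr add0r.
Qed.

(* By the symmetry v |-> flip v k, the agreeing and disagreeing halves of the
   cube have the same size. *)
Lemma sum_flip_sign (R : numDomainType) s k :
  \sum_(v : {ffun 'I_d -> bool}) (if v k == s k then 1 else -1 : R) = 0.
Proof.
set S := \sum_v _.
have SN : S = - S.
  rewrite {1}/S (reindex_inj (can_inj (flipK k))) -sumrN; apply: eq_bigr => v _.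
  by rewrite flip_at; case: (v k); case: (s k); rewrite /= ?opprK.
by apply/eqP; move: (mulrn_eq0 S 2); rewrite mulr2n {2}SN subrr eqxx => /= <-.
Qed.

End Hypercube.

Section Polytope.
Variables (R : realFieldType) (n : nat).
Local Open Scope ring_scope.

Lemma sum_indicator (T : finType) (A : {set T}) : \sum_i ((i \in A)%:R : R) = #|A|%:R.
Proof. by rewrite (eq_bigr (fun i => if i \in A then 1 else 0)) -?big_mkcond ?sumr_const // => i; case: (i \in A). Qed.

Lemma dotv_combination (c : 'rV[R]_n) (lam : {set 'I_n} -> R) :
  dotv c (\sum_B lam B *: indic R B) = \sum_B lam B * dotv c (indic R B).
Proof.
rewrite /dotv; under eq_bigr do rewrite summxE mulr_sumr.
rewrite exchange_big; apply: eq_bigr => B _; rewrite mulr_sumr.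
by apply: eq_bigr => i _; rewrite !mxE mulrCA.
Qed.

Lemma dotv_indic (A B : {set 'I_n}) : dotv (indic R A) (indic R B) = #|A :&: B|%:R.
Proof.
rewrite /dotv -sum_indicator; apply: eq_bigr => i _.
by rewrite !mxE -natrM mulnb inE.
Qed.

Lemma dotv_indicB (A1 A2 B : {set 'I_n}) :
  dotv (indic R A1 - indic R A2) (indic R B) = #|B :\: A2|%:R - #|B :\: A1|%:R.
Proof.
have -> : dotv (indic R A1 - indic R A2) (indic R B) =
          dotv (indic R A1) (indic R B) - dotv (indic R A2) (indic R B).
  by rewrite /dotv -sumrB; apply: eq_bigr => i _; rewrite !mxE mulrBl.
rewrite !dotv_indic ![_ :&: B]setIC.
have cI A : (#|B :&: A|%:R : R) = #|B|%:R - #|B :\: A|%:R.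
  by rewrite -(cardsID A B) natrD addrK.
by rewrite !cI opprB addrC addrA subrK.
Qed.

Lemma indic_base_polytope (N : matroid n) B :
  B \in bases N -> base_polytope R N (indic R B).
Proof.
move=> hB; exists (fun C => (C == B)%:R); split.
- by move=> C; rewrite ler0n.
- by move=> C hC; case: eqP => // E; rewrite E hB in hC.
- by rewrite (bigD1 B) //= eqxx big1 ?addr0 // => C /negbTE ->.
- by rewrite (bigD1 B) //= eqxx scale1r big1 ?addr0 // => C /negbTE ->; rewrite scale0r.
Qed.

(* A convex combination of 0/1 vectors e_C can only equal e_B if every C with
   positive weight equals B: at each coordinate the weights are pinned. *)
Lemma convex_indic_support (lam : {set 'I_n} -> R) B :
  (forall C, 0 <= lam C) -> \sum_C lam C = 1 ->
  indic R B = \sum_C lam C *: indic R C -> forall C, lam C != 0 -> C = B.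
Proof.
move=> ge0 s1 e C nz.
have coord i : ((i \in B)%:R : R) = \sum_D lam D * (i \in D)%:R.
  have := congr1 (fun m : 'rV[R]_n => m ord0 i) e; rewrite /= mxE summxE => ->.
  by apply: eq_bigr => D _; rewrite !mxE.
have zero_at (f : {set 'I_n} -> R) : (forall D, 0 <= f D) ->
    \sum_D lam D * f D = 0 -> f C = 0.
  move=> f0 s; have := psumr_eq0P (fun D _ => mulr_ge0 (ge0 D) (f0 D)) s (i := C) isT.
  by move/eqP; rewrite mulf_eq0 (negbTE nz) => /eqP.
apply/setP => i; case hi: (i \in B).
- have f0 (D : {set 'I_n}) : 0 <= 1 - ((i \in D)%:R : R) by case: (i \in D); rewrite ?subrr ?subr0.
  have s : \sum_D lam D * (1 - (i \in D)%:R) = 0.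
    by under eq_bigr do rewrite mulrBr mulr1; rewrite sumrB s1 -coord hi subrr.
  by move: (zero_at _ f0 s); case: (i \in C) => // /eqP; rewrite subr0 oner_eq0.
- have s : \sum_D lam D * (i \in D)%:R = 0 by rewrite -coord hi.
  by move: (zero_at _ (fun D => ler0n _ _) s); case: (i \in C) => // /eqP; rewrite oner_eq0.
Qed.

Lemma base_of_indic (N : matroid n) B : base_polytope R N (indic R B) -> B \in bases N.
Proof.
move=> [lam [ge0 off s1 e]].
have [/existsP [C nz]|/existsPn all0] := boolP [exists C, lam C != 0].
  rewrite -(convex_indic_support ge0 s1 e nz).
  by apply: contraR nz => /off ->; rewrite eqxx.
by move: s1; rewrite big1 => [/eqP|C _]; [rewrite eq_sym oner_eq0|apply/eqP/negPn].
Qed.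

Lemma dotv_base_polytope (N : matroid n) c a y :
  (forall B, B \in bases N -> dotv c (indic R B) = a) ->
  base_polytope R N y -> dotv c y = a.
Proof.
move=> cN [lam [_ off s1 ->]]; rewrite dotv_combination -[RHS]mul1r -s1 mulr_suml.
apply: eq_bigr => B _; case: (boolP (B \in bases N)) => hB; first by rewrite cN.
by rewrite off // !mul0r.
Qed.

Definition barycenter (M : matroid n) : 'rV[R]_n :=
  \sum_B ((B \in bases M)%:R / #|bases M|%:R) *: indic R B.

Lemma barycenter_in (M : matroid n) : base_polytope R M (barycenter M).
Proof.
have c0 : #|bases M|%:R != 0 :> R.
  by rewrite pnatr_eq0 -lt0n card_gt0 bases_nonempty.
exists (fun B => (B \in bases M)%:R / #|bases M|%:R); split => //.
- by move=> B; rewrite divr_ge0 ?ler0n.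
- by move=> B /negbTE ->; rewrite mul0r.
- by rewrite -mulr_suml sum_indicator divff.
Qed.

Lemma dotv_barycenter (M : matroid n) c :
  dotv c (barycenter M) = #|bases M|%:R^-1 * \sum_(B in bases M) dotv c (indic R B).
Proof.
rewrite dotv_combination mulr_sumr [RHS]big_mkcond /=; apply: eq_bigr => B _.
by case: (B \in bases M); rewrite ?mul0r ?mulr0 // mul1r mulrC.
Qed.

End Polytope.

Section CubeMatroid.
Variables (n d : nat) (M : matroid n) (phi : {ffun 'I_d -> bool} -> {set 'I_n}).
Hypothesis phi_inj : injective phi.
Hypothesis phi_on : forall B, B \in bases M <-> exists v, phi v = B.
Hypothesis phi_adj : forall u v, base_adj (phi u) (phi v) = cube_adj u v.

Lemma phi_base v : phi v \in bases M.
Proof. by apply/phi_on; exists v. Qed.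

Lemma bases_image : bases M = phi @: setT.
Proof.
apply/setP => B; apply/idP/imsetP => [/phi_on [v <-]|[v _ ->]]; first by exists v.
exact: phi_base.
Qed.

(* Walking along cube edges: each step changes the set difference by at most one. *)
Lemma card_setD_le_hamming u v : #|phi u :\: phi v| <= hamming u v.
Proof.
move e : (hamming u v) => m; elim: m u e => [|m IH] u e.
  by rewrite (hamming0 e) setDv cards0.
have [k hk] : exists k, u k != v k by apply: hamming_gt0; rewrite e.
move: e; rewrite (hamming_flip hk) => -[e].
apply: leq_trans (card_setD_triangle _ (phi (flip u k)) _) _.
by rewrite (base_adj_card_setD (phi_base _) (phi_base _)) ?phi_adj ?cube_adj_flip // add1n ltnS IH.
Qed.

(* Walking along exchanges: each exchange reduces the set difference by one
   and moves along one cube edge. *)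
Lemma hamming_le_card_setD u v : hamming u v <= #|phi u :\: phi v|.
Proof.
move e : #|phi u :\: phi v| => m; elim: m u e => [|m IH] u e.
  have E := base_eq_of_setD0 (phi_base u) (phi_base v) (cards0_eq e).
  by rewrite (phi_inj E) leqn0 /hamming cards_eq0; apply/eqP/setP => i; rewrite !inE eqxx.
have [x hx] : exists x, x \in phi u :\: phi v by apply/set0Pn; rewrite -card_gt0 e.
have [y hy hB] := bases_exchange (phi_base u) (phi_base v) hx.
have [u' hu'] := (phi_on _).1 hB.
have [_ _ e3 adj] := exchange_sets hx hy; rewrite -hu' in e3 adj.
apply: leq_trans (hamming_triangle u u' v) _.
have -> : hamming u u' = 1%N by move: adj; rewrite phi_adj => /eqP.
rewrite ltnS IH //; move: (cardsD1 x (phi u :\: phi v)).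
by rewrite hx e e3 add1n => -[].
Qed.

Lemma card_setD_phi u v : #|phi u :\: phi v| = hamming u v.
Proof. by apply/eqP; rewrite eqn_leq card_setD_le_hamming hamming_le_card_setD. Qed.

Variable N : matroid n.
Hypothesis N_sub : forall B, B \in bases N -> B \in bases M.

(* The exchanges from phi s towards phi t give bases of N
   adjacent to phi s, i.e. flips of s in coordinates where s and t differ;
   since they remove all |D| elements of phi s \ phi t, every coordinate of D,
   k included, is reached. *)
Lemma flip_closed s t k : phi s \in bases N -> phi t \in bases N -> s k != t k ->
  phi (flip s k) \in bases N.
Proof.
move=> hs ht hk.
set A := phi s :\: phi t; set D := [set i | s i != t i].
set K := [set j in D | phi (flip s j) \in bases N].
have AD : #|A| = #|D| by rewrite /A card_setD_phi.
have [x0 _] : exists x0, x0 \in A.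
  by apply/set0Pn; rewrite -card_gt0 AD card_gt0; apply/set0Pn; exists k; rewrite inE.
(* removed j : the unique element of phi s missing from its neighbour flip s j *)
pose removed j := odflt x0 [pick z in phi s :\: phi (flip s j)].
have removedE j : phi s :\: phi (flip s j) = [set removed j].
  have /cards1P [z hz] : #|phi s :\: phi (flip s j)| == 1%N.
    by rewrite card_setD_phi; exact: cube_adj_flip.
  rewrite /removed hz; case: pickP => [z' /set1P -> //| H].
  by have := H z; rewrite inE eqxx.
have A_removed : A \subset removed @: K.
  apply/subsetP => x hx.
  have [y hy hB] := bases_exchange hs ht hx.
  have [s' hs'] := (phi_on _).1 (N_sub hB).
  have [e1 _ e3 adj] := exchange_sets hx hy.
  rewrite -hs' phi_adj in adj; rewrite -hs' in e1 e3 hB.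
  have [j ej] := cube_adjP adj; subst s'.
  have jD : j \in D.
    rewrite inE; apply/negP => /eqP /hamming_flip_same.
    rewrite -!card_setD_phi e3 -/A (cardsD1 x A) hx add1n.
    by move/eqP; rewrite -{1}[#|A :\ x|]addn0 -addn2 eqn_add2l.
  apply/imsetP; exists j; first by rewrite inE jD.
  by have /setP/(_ x) := removedE j; rewrite e1 !inE eqxx => /esym/eqP.
have KD : K = D.
  apply/eqP; rewrite eqEcard -AD; apply/andP; split.
    by apply/subsetP=> j; rewrite inE => /andP[].
  exact: leq_trans (subset_leq_card A_removed) (leq_imset_card _ _).
have : k \in K by rewrite KD inE.
by rewrite inE => /andP[].
Qed.

(* If every coordinate varies among the bases of N, then N has all bases of M:
   from one base of N every vertex of the cube is reached by flips. *)
Lemma cube_submatroid_full s0 : phi s0 \in bases N ->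
  (forall s k, phi s \in bases N -> exists2 q, phi q \in bases N & q k != s k) ->
  forall v, phi v \in bases N.
Proof.
move=> h0 varies v.
move e : (hamming s0 v) => m; elim: m s0 e h0 => [|m IH] s e hs.
  by rewrite -(hamming0 e).
have [k hk] : exists k, s k != v k by apply: hamming_gt0; rewrite e.
move: e; rewrite (hamming_flip hk) => -[e].
apply: IH e _; have [q hq qk] := varies s k hs.
by apply: flip_closed hs hq _; rewrite eq_sym.
Qed.

Variable R : realFieldType.
Local Open Scope ring_scope.

(* The facet functional e_{phi s} - e_{phi (flip s k)} is +1 on vertices agreeing
   with s at k and -1 elsewhere; hence it vanishes at the barycenter of P(M). *)
Lemma dotv_flip_functional s k v :
  dotv (indic R (phi s) - indic R (phi (flip s k))) (indic R (phi v)) =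
  if v k == s k then 1 else -1.
Proof. by rewrite dotv_indicB !card_setD_phi hamming_flip_sign. Qed.

Lemma barycenter_flip_functional s k :
  dotv (indic R (phi s) - indic R (phi (flip s k))) (barycenter R M) = 0.
Proof.
rewrite dotv_barycenter bases_image big_imset; last by move=> u v _ _; exact: phi_inj.
rewrite (eq_bigl predT) => [|v]; last by rewrite inE.
by rewrite (eq_bigr _ (fun v _ => dotv_flip_functional s k v)) sum_flip_sign mulr0.
Qed.

(* If P(N) contains the barycenter of P(M), every coordinate varies among the
   bases of N; otherwise the facet functional would be 1 on P(N) and 0 there. *)
Lemma barycenter_coordinate_varies s k :
  base_polytope R N (barycenter R M) -> phi s \in bases N ->
  exists2 q, phi q \in bases N & q k != s k.
Proof.
move=> hx hs; case: (boolP [exists q, (phi q \in bases N) && (q k != s k)]).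
  by move=> /existsP [q /andP [hq qk]]; exists q.
move=> /existsPn agree; exfalso.
have one : dotv (indic R (phi s) - indic R (phi (flip s k))) (barycenter R M) = 1.
  apply: dotv_base_polytope hx => B hB.
  have [v ev] := (phi_on B).1 (N_sub hB); rewrite -ev in hB *.
  by rewrite dotv_flip_functional; move: (agree v); rewrite hB /= negbK => ->.
by move: one; rewrite barycenter_flip_functional => /eqP; rewrite eq_sym oner_eq0.
Qed.

Lemma barycenter_forces_all_bases :
  base_polytope R N (barycenter R M) -> bases N = bases M.
Proof.
move=> hx.
have [B0 hB0] : exists B0, B0 \in bases N by apply/set0Pn; apply: bases_nonempty.
have [s0 hs0] := (phi_on B0).1 (N_sub hB0); rewrite -hs0 in hB0.
apply/setP => B; apply/idP/idP => [/N_sub //|/phi_on [v <-]].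
by apply: cube_submatroid_full hB0 _ v => s k; apply: barycenter_coordinate_varies.
Qed.

End CubeMatroid.

Theorem corollary7 (R : realFieldType) (n : nat) (M : matroid n) (d : nat) :
  base_graph_is_cube M d -> indecomposable R M.
Proof.
move=> [phi [phi_inj phi_on phi_adj]] [t [Ms [_ [cover _] proper]]].
have [i xi] := (cover _).1 (barycenter_in R M).
have sub B : B \in bases (Ms i) -> B \in bases M.
  by move=> hB; apply: (base_of_indic (R := R)); apply/cover; exists i; exact: indic_base_polytope.
have eqb := barycenter_forces_all_bases phi_inj phi_on phi_adj sub xi.
by apply: (proper i) => y; rewrite /base_polytope eqb.
Qed.
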